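(* Let $I$ be a real interval of length $H \geq 1$. For every polynomial $P(T) = a_0 T^2 + a_1 T + a_2 \in \mathbb{Z}[T]$ with $a_0 \neq 0$ and every integer $k$, the number of integer points $(x,y) \in (I \times I) \cap \mathbb{Z}^2$ satisfying $P(x) + P(y) = k$ is at most $\sup_{1 \leq n \leq 144 H^4} r(n)$.
   Context: For an integer $n \geq 0$, $r(n)$ denotes the number of pairs of integers $(x,y)$ with $x^2 + y^2 = n$. *)

From Stdlib Require Import Reals ZArith List Lia Lra.
Import ListNotations.
Open Scope Z_scope.

Definition Zsym_range (m : Z) : list Z :=
  map (fun k => Z.of_nat k - m) (seq 0 (Z.to_nat (2 * m + 1))).

(* r(n) = #{(x,y) in Z^2 | x^2 + y^2 = n}; every solution has |x|,|y| <= n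
   (for n >= 0), so enumerating [-n,n]^2 counts all of them. *)
Definition r (n : Z) : nat :=
  length (filter (fun p : Z * Z => Z.eqb (fst p ^ 2 + snd p ^ 2) n)
                 (list_prod (Zsym_range n) (Zsym_range n))).

Close Scope Z_scope.
Open Scope R_scope.

(* I is a real interval of length H: its endpoints are a <= b with b - a = H,
   and I lies between the open interval (a,b) and the closed one [a,b]
   (this covers open, closed, half-open intervals). *)
Definition is_interval_of_length (I : R -> Prop) (H : R) : Prop :=
  exists a b : R, a <= b /\ b - a = H /\
    (forall x, a < x < b -> I x) /\ (forall x, I x -> a <= x <= b).

Definition evalP (a0 a1 a2 x : Z) : Z := (a0 * x ^ 2 + a1 * x + a2)%Z.

From Stdlib Require Import Reals ZArith List Lia Lra Psatz.
Open Scope Z_scope.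

(* Put S(u) = x + y and N(u) = x^2 + y^2 for u = (x,y), both
   measured from a centre c (here the first coordinate of a chosen point).
   Since P(x) + P(y) = a0 N + (2 a0 c + a1) S + const, the integer points of
   the level set P(x) + P(y) = k satisfy one linear relation a0 N + b S = K.
   - If two points p, q of the level set have different sums, put
     d = S(p) - S(q) <> 0 and E = N(p) - N(q).  Every point u of the level set
     then satisfies d N(u) - E S(u) = const, so the injective affine "chord map"
     u |-> (2 d (x - c) - E, 2 d (y - c) - E) sends the level set into the
     circle of some radius^2 n, and n <= 144 H^4 because |d| <= 2H,
     |E| <= 2H^2 and all coordinates differ from c by at most H.
   - If all points have the same sum, (x - y)^2 is constant on them and
     u |-> (x - y, 1) is injective into the circle of radius^2 (x - y)^2 + 1.
   In both cases the points inject into the representations of n as a sum of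
   two squares, hence there are at most r(n) of them. *)

Definition sq_norm (u : Z * Z) : Z := fst u ^ 2 + snd u ^ 2.

Lemma r_enumerates (u : Z * Z) (n : Z) :
  sq_norm u = n ->
  In u (filter (fun p : Z * Z => Z.eqb (fst p ^ 2 + snd p ^ 2) n)
               (list_prod (Zsym_range n) (Zsym_range n))).
Proof.
  destruct u as [x y]; unfold sq_norm; cbn [fst snd]; intros hn.
  assert (in_range : forall v, v ^ 2 <= n -> In v (Zsym_range n)).
  { intros v hv. unfold Zsym_range. apply in_map_iff.
    exists (Z.to_nat (v + n)). split; [rewrite Z2Nat.id; nia|].
    apply in_seq. split; [lia|]. apply Nat2Z.inj_lt. rewrite !Z2Nat.id; nia. }
  apply filter_In. split.
  - apply in_prod; apply in_range; nia.
  - apply Z.eqb_eq. exact hn.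
Qed.

Lemma length_le_r (pts : list (Z * Z)) (f : Z * Z -> Z * Z) (n : Z) :
  NoDup pts ->
  (forall p q, In p pts -> In q pts -> f p = f q -> p = q) ->
  (forall p, In p pts -> sq_norm (f p) = n) ->
  (length pts <= r n)%nat.
Proof.
  intros hnd hinj hcirc. rewrite <- (length_map f pts). unfold r.
  apply NoDup_incl_length; [exact (NoDup_map_NoDup_ForallPairs f hinj hnd)|].
  intros u hu. apply in_map_iff in hu as [p [<- hp]].
  apply r_enumerates, hcirc, hp.
Qed.

Definition sum_from (c : Z) (u : Z * Z) : Z := (fst u - c) + (snd u - c).
Definition norm_from (c : Z) (u : Z * Z) : Z := (fst u - c) ^ 2 + (snd u - c) ^ 2.

Lemma level_set_recentred (a0 a1 a2 k c : Z) (u : Z * Z) :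
  evalP a0 a1 a2 (fst u) + evalP a0 a1 a2 (snd u) = k ->
  a0 * norm_from c u + (2 * a0 * c + a1) * sum_from c u
    = k - 2 * a2 - 2 * a0 * c ^ 2 - 2 * a1 * c.
Proof. unfold evalP, norm_from, sum_from. intros <-. ring. Qed.

Lemma collinear_on_line (a0 b K N1 S1 N2 S2 N3 S3 : Z) :
  a0 <> 0 ->
  a0 * N1 + b * S1 = K -> a0 * N2 + b * S2 = K -> a0 * N3 + b * S3 = K ->
  (S2 - S3) * (N1 - N2) = (N2 - N3) * (S1 - S2).
Proof.
  intros ha0 h1 h2 h3. apply (Z.mul_reg_l _ _ a0 ha0).
  transitivity ((S2 - S3) * ((a0 * N1 + b * S1) - (a0 * N2 + b * S2))
                - b * (S2 - S3) * (S1 - S2)); [ring|].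
  transitivity ((S1 - S2) * ((a0 * N2 + b * S2) - (a0 * N3 + b * S3))
                - b * (S2 - S3) * (S1 - S2)); [|ring].
  rewrite h1, h2, h3. ring.
Qed.

Definition chord_map (c d E : Z) (u : Z * Z) : Z * Z :=
  (2 * d * (fst u - c) - E, 2 * d * (snd u - c) - E).

Lemma chord_map_inj (c d E : Z) (u v : Z * Z) :
  d <> 0 -> chord_map c d E u = chord_map c d E v -> u = v.
Proof.
  destruct u as [x y], v as [x' y']; unfold chord_map; cbn [fst snd].
  intros hd heq.
  pose proof (f_equal fst heq) as hx. pose proof (f_equal snd heq) as hy.
  cbn [fst snd] in hx, hy.
  assert (hx0 : 2 * d * (x - x') = 0)
    by (transitivity ((2 * d * (x - c) - E) - (2 * d * (x' - c) - E));
        [ring | rewrite hx; ring]).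
  assert (hy0 : 2 * d * (y - y') = 0)
    by (transitivity ((2 * d * (y - c) - E) - (2 * d * (y' - c) - E));
        [ring | rewrite hy; ring]).
  apply Z.mul_eq_0 in hx0 as [hx0|hx0], hy0 as [hy0|hy0]; f_equal; lia.
Qed.

Lemma chord_map_norm (c d E : Z) (u : Z * Z) :
  sq_norm (chord_map c d E u)
    = 4 * d * (d * norm_from c u - E * sum_from c u) + 2 * E ^ 2.
Proof. unfold sq_norm, chord_map, norm_from, sum_from; cbn [fst snd]. ring. Qed.

Lemma chord_map_on_circle (a0 a1 a2 k c : Z) (p q u : Z * Z) :
  a0 <> 0 ->
  evalP a0 a1 a2 (fst p) + evalP a0 a1 a2 (snd p) = k ->
  evalP a0 a1 a2 (fst q) + evalP a0 a1 a2 (snd q) = k ->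
  evalP a0 a1 a2 (fst u) + evalP a0 a1 a2 (snd u) = k ->
  let d := sum_from c p - sum_from c q in
  let E := norm_from c p - norm_from c q in
  sq_norm (chord_map c d E u) = sq_norm (chord_map c d E p).
Proof.
  intros ha0 hp hq hu d E. rewrite !chord_map_norm.
  assert (hline : d * (norm_from c u - norm_from c p)
                  = E * (sum_from c u - sum_from c p)).
  { apply (collinear_on_line a0 (2 * a0 * c + a1)
             (k - 2 * a2 - 2 * a0 * c ^ 2 - 2 * a1 * c)); trivial;
      apply level_set_recentred; assumption. }
  transitivity (4 * d * (d * norm_from c p - E * sum_from c p
                         + (d * (norm_from c u - norm_from c p)
                            - E * (sum_from c u - sum_from c p))) + 2 * E ^ 2);
    [ring|].
  rewrite hline. ring.
Qed.

Lemma level_set_same_sum (a0 a1 a2 k : Z) (u v : Z * Z) :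
  a0 <> 0 ->
  evalP a0 a1 a2 (fst u) + evalP a0 a1 a2 (snd u) = k ->
  evalP a0 a1 a2 (fst v) + evalP a0 a1 a2 (snd v) = k ->
  fst u + snd u = fst v + snd v ->
  (fst u - snd u) ^ 2 = (fst v - snd v) ^ 2.
Proof.
  destruct u as [x y], v as [x' y']; unfold evalP; cbn [fst snd].
  intros ha0 hu hv hs. apply (Z.mul_reg_l _ _ a0 ha0).
  assert (hdiag : forall s t, 2 * (a0 * s ^ 2 + a1 * s + a2 + (a0 * t ^ 2 + a1 * t + a2))
             = a0 * (s - t) ^ 2 + a0 * (s + t) ^ 2 + 2 * a1 * (s + t) + 4 * a2)
    by (intros; ring).
  pose proof (hdiag x y) as ex. pose proof (hdiag x' y') as ex'.
  rewrite hu in ex. rewrite hv in ex'. rewrite hs in ex. lia.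
Qed.

Open Scope R_scope.

Lemma chord_norm_bound (H d s t e : R) :
  0 <= H -> -2 * H <= d <= 2 * H -> -H <= s <= H -> -H <= t <= H ->
  -2 * H ^ 2 <= e <= 2 * H ^ 2 ->
  (2 * d * s - e) ^ 2 + (2 * d * t - e) ^ 2 <= 144 * H ^ 4.
Proof.
  intros hH hd hs ht he.
  assert (hds : -2 * H ^ 2 <= d * s <= 2 * H ^ 2) by (split; nra).
  assert (hdt : -2 * H ^ 2 <= d * t <= 2 * H ^ 2) by (split; nra).
  assert (0 <= H ^ 2) by nra.
  assert (hbig : forall w, -6 * H ^ 2 <= w <= 6 * H ^ 2 -> w ^ 2 <= 36 * H ^ 4)
    by (intros w hw; replace (H ^ 4) with (H ^ 2 * H ^ 2) by ring; nra).
  pose proof (hbig (2 * d * s - e) ltac:(lra)).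
  pose proof (hbig (2 * d * t - e) ltac:(lra)).
  assert (0 <= H ^ 4) by (replace (H ^ 4) with (H ^ 2 * H ^ 2) by ring; nra).
  lra.
Qed.

Lemma norm_diff_bound (H s t s' t' : R) :
  -H <= s <= H -> -H <= t <= H -> -H <= s' <= H -> -H <= t' <= H ->
  -2 * H ^ 2 <= (s ^ 2 + t ^ 2) - (s' ^ 2 + t' ^ 2) <= 2 * H ^ 2.
Proof. intros; split; nra. Qed.

Lemma IZR_chord_norm (c d E : Z) (u : Z * Z) :
  IZR (sq_norm (chord_map c d E u))
    = (2 * IZR d * IZR (fst u - c) - IZR E) ^ 2
      + (2 * IZR d * IZR (snd u - c) - IZR E) ^ 2.
Proof.
  unfold sq_norm, chord_map; cbn [fst snd].
  rewrite !Z.pow_2_r; repeat rewrite ?plus_IZR, ?mult_IZR, ?minus_IZR. ring.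
Qed.

Lemma IZR_norm_diff (c : Z) (u v : Z * Z) :
  IZR (norm_from c u - norm_from c v)
    = (IZR (fst u - c) ^ 2 + IZR (snd u - c) ^ 2)
      - (IZR (fst v - c) ^ 2 + IZR (snd v - c) ^ 2).
Proof.
  unfold norm_from. rewrite !Z.pow_2_r; repeat rewrite ?plus_IZR, ?mult_IZR, ?minus_IZR. ring.
Qed.

Section LevelSetPoints.

Variables (a0 a1 a2 k : Z) (lo hi H : R) (pts : list (Z * Z)).
Hypothesis ha0 : a0 <> 0%Z.
Hypothesis hlen : hi - lo = H.
Hypothesis hH : 1 <= H.
Hypothesis hnd : NoDup pts.
Hypothesis hbox :
  forall p, In p pts -> lo <= IZR (fst p) <= hi /\ lo <= IZR (snd p) <= hi.
Hypothesis hlevel :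
  forall p, In p pts -> (evalP a0 a1 a2 (fst p) + evalP a0 a1 a2 (snd p))%Z = k.

Lemma coord_gap (u v : Z) :
  lo <= IZR u <= hi -> lo <= IZR v <= hi -> -H <= IZR (u - v) <= H.
Proof. rewrite minus_IZR. lra. Qed.

Lemma count_on_diagonal (p : Z * Z) :
  In p pts -> (forall u, In u pts -> fst u + snd u = fst p + snd p)%Z ->
  exists n : Z, (1 <= n)%Z /\ IZR n <= 144 * H ^ 4 /\ (length pts <= r n)%nat.
Proof.
  intros hp hsum. exists ((fst p - snd p) ^ 2 + 1)%Z. repeat split.
  - nia.
  - destruct (hbox p hp) as [hx hy].
    pose proof (coord_gap _ _ hx hy) as hgap.
    rewrite plus_IZR, Z.pow_2_r, mult_IZR.
    assert (1 <= H ^ 4) by (apply pow_R1_Rle; lra).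
    assert (IZR (fst p - snd p) ^ 2 <= H ^ 2) by nra.
    assert (H ^ 2 <= H ^ 4) by (replace (H ^ 4) with (H ^ 2 * H ^ 2) by ring; nra).
    simpl IZR. nra.
  - apply (length_le_r pts (fun u => (fst u - snd u, 1)%Z)); trivial.
    + intros [x y] [x' y'] hu hv [= hd].
      pose proof (hsum _ hu). pose proof (hsum _ hv). cbn [fst snd] in *.
      f_equal; lia.
    + intros u hu. unfold sq_norm; cbn [fst snd].
      rewrite (level_set_same_sum a0 a1 a2 k u p); auto.
Qed.

Lemma count_on_chord_circle (p q : Z * Z) :
  In p pts -> In q pts -> (fst q + snd q <> fst p + snd p)%Z ->
  exists n : Z, (1 <= n)%Z /\ IZR n <= 144 * H ^ 4 /\ (length pts <= r n)%nat.
Proof.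
  intros hp hq hpq.
  set (c := fst p).
  set (d := (sum_from c p - sum_from c q)%Z).
  set (E := (norm_from c p - norm_from c q)%Z).
  set (f := chord_map c d E).
  assert (hd : d <> 0%Z) by (unfold d, sum_from; lia).
  assert (hcircle : forall u, In u pts -> sq_norm (f u) = sq_norm (f p))
    by (intros u hu; apply (chord_map_on_circle a0 a1 a2 k); auto).
  exists (sq_norm (f p)). repeat split.
  - (* n = 0 would force f p = f q = (0,0), hence p = q *)
    assert (hnz : forall u : Z * Z, sq_norm u = 0%Z -> u = (0, 0)%Z)
      by (intros [x y]; unfold sq_norm; cbn [fst snd]; intros; f_equal; nia).
    assert (sq_norm (f p) <> 0%Z).
    { intros h0. apply hpq.
      assert (himg : f p = f q)
        by (rewrite (hnz _ h0), (hnz (f q)); [reflexivity | rewrite hcircle; auto]).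
      rewrite (chord_map_inj c d E p q hd himg). reflexivity. }
    unfold sq_norm in *. nia.
  - destruct (hbox p hp) as [hxp hyp], (hbox q hq) as [hxq hyq].
    assert (hdR : IZR d = IZR (fst p - fst q) + IZR (snd p - snd q))
      by (rewrite <- plus_IZR; f_equal; unfold d, sum_from; ring).
    unfold f. rewrite IZR_chord_norm.
    apply chord_norm_bound; try lra;
      try (apply coord_gap; assumption).
    + pose proof (coord_gap _ _ hxp hxq). pose proof (coord_gap _ _ hyp hyq). lra.
    + unfold E. rewrite IZR_norm_diff.
      apply norm_diff_bound; apply coord_gap; assumption.
  - apply (length_le_r pts f); trivial.
    intros u v _ _. apply chord_map_inj, hd.
Qed.

End LevelSetPoints.

Theorem corollary2 (I : R -> Prop) (H : R) (a0 a1 a2 k : Z)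
  (hI : is_interval_of_length I H) (hH : 1 <= H) (ha0 : a0 <> 0%Z)
  (pts : list (Z * Z)) (hnd : NoDup pts)
  (hpts : forall p, In p pts ->
     I (IZR (fst p)) /\ I (IZR (snd p)) /\
     (evalP a0 a1 a2 (fst p) + evalP a0 a1 a2 (snd p))%Z = k) :
  exists n : Z, (1 <= n)%Z /\ IZR n <= 144 * H ^ 4 /\ (length pts <= r n)%nat.
Proof.
  destruct hI as (lo & hi & _ & hlen & _ & hIbox).
  assert (hbox : forall p, In p pts ->
            lo <= IZR (fst p) <= hi /\ lo <= IZR (snd p) <= hi)
    by (intros p hp; destruct (hpts p hp) as (hx & hy & _); auto).
  assert (hlevel : forall p, In p pts ->
            (evalP a0 a1 a2 (fst p) + evalP a0 a1 a2 (snd p))%Z = k)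
    by (intros p hp; apply hpts, hp).
  destruct pts as [|p rest].
  - exists 1%Z. repeat split; [lia | pose proof (pow_R1_Rle H 4 hH); lra | simpl; lia].
  - set (same_sum u := (fst u + snd u = fst p + snd p)%Z).
    destruct (Forall_Exists_dec same_sum (fun u => Z.eq_dec _ _) (p :: rest))
      as [hall | hsome].
    + apply (count_on_diagonal a0 a1 a2 k lo hi) with p; simpl; auto.
      intros u hu. exact (proj1 (Forall_forall _ _) hall u hu).
    + apply Exists_exists in hsome as (q & hq & hqp).
      apply (count_on_chord_circle a0 a1 a2 k lo hi) with p q; simpl; auto.
Qed.
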